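(* For all integers $b\ge2$ and $k\ge0$, $$\alpha_k(\mathbb{Z},b)=\sum_{i=1}^\infty\left\lfloor\frac{k}{b^i}\right\rfloor,$$ and for $k=0,1,2,\dots$, $$k!_{\mathbb{Z},\mathbb{N}}=\prod_{b=2}^k b^{\alpha_k(\mathbb{Z},b)}.$$
   Context: $\mathbb{N}=\{0,1,2,\dots\}$. For an integer $b\ge0$ and $a\in\mathbb{Z}$ define $\operatorname{ord}_b(a):=\sup\{k\in\mathbb{N}: a\mathbb{Z}\subseteq b^k\mathbb{Z}\}$ (convention $0^0=1$); thus for $b\ge2$ it is the largest $k$ with $b^k\mid a$ ($+\infty$ for $a=0$), $\operatorname{ord}_0(a)=+\infty$ if $a=0$ and $0$ otherwise, and $\operatorname{ord}_1(a)=+\infty$. For nonempty $S\subseteq\mathbb{Z}$, a $b$-ordering of $S$ is a sequence $(a_i)_{i\ge0}$ in $S$ such that for each $i\ge1$, $a_i$ attains $\min_{a'\in S}\sum_{j=0}^{i-1}\operatorname{ord}_b(a'-a_j)$; the $b$-exponent sequence is $\alpha_k(S,b):=\sum_{j=0}^{k-1}\operatorname{ord}_b(a_k-a_j)$ for any $b$-ordering (independent of the choice). For $\mathcal{T}\subseteq\mathbb{N}$ the generalized factorial is $k!_{S,\mathcal{T}}:=\prod_{b\in\mathcal{T}}b^{\alpha_k(S,b)}$, with conventions $b^{+\infty}=0$ for $b=0$ and $b\ge2$, $1^{+\infty}=1$, and $b^0=1$ for all $b\in\mathbb{N}$. *)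

From mathcomp Require Import all_boot all_order all_algebra.
From Stdlib Require Import ClassicalEpsilon.
Set Implicit Arguments. Unset Strict Implicit. Unset Printing Implicit Defensive.
Import Order.TTheory GRing.Theory Num.Theory.

(* Extended naturals N ∪ {+oo}: [Some n] is n, [None] is +oo. *)
Definition enat := option nat.

Definition eadd (x y : enat) : enat :=
  match x, y with Some m, Some n => Some (m + n)%N | _, _ => None end.

Definition ele (x y : enat) : Prop :=
  match x, y with
  | _, None => True
  | None, Some _ => False
  | Some m, Some n => (m <= n)%N
  end.

(* ord_b(a) = sup{k in N : aZ ⊆ b^k Z}, computed case by case:
   b = 0 : +oo if a = 0, else 0;   b = 1 : +oo;
   b >= 2: +oo if a = 0, else the largest k with b^k | a. *)
Definition ord (b : nat) (a : int) : enat :=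
  match b with
  | 0 => if a == 0%R then None else Some 0%N
  | 1 => None
  | _ => if a == 0%R then None
         else Some (\max_(k < `|a|%N.+1 | (b ^ k %| `|a|%N)%N) (k : nat))
  end.

Definition osum (b : nat) (a : nat -> int) (i : nat) (x : int) : enat :=
  \big[eadd/Some 0%N]_(j < i) ord b (x - a j)%R.

Definition b_ordering (S : int -> Prop) (b : nat) (a : nat -> int) : Prop :=
  (forall i, S (a i)) /\
  (forall i, (1 <= i)%N -> forall a', S a' -> ele (osum b a i (a i)) (osum b a i a')).

(* alpha_k(S,b), computed from some (chosen) b-ordering; the value is
   independent of the choice (a fact from the paper, not used as a definition).
   If no b-ordering exists, a junk value +oo is returned. *)
Definition alpha (S : int -> Prop) (b k : nat) : enat :=
  match excluded_middle_informative (exists a, b_ordering S b a) with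
  | left H => let a := proj1_sig (constructive_indefinite_description _ H) in
              osum b a k (a k)
  | right _ => None
  end.

Definition epow (b : nat) (x : enat) : nat :=
  match x with Some n => (b ^ n)%N | None => if b == 1%N then 1%N else 0%N end.

(* Product over b in T of f b, when only finitely many factors differ from 1:
   s is a duplicate-free finite list of elements of T containing every b in T
   with f b <> 1. *)
Definition fin_support (T : nat -> Prop) (f : nat -> nat) (s : seq nat) : Prop :=
  uniq s /\ (forall b, b \in s -> T b) /\ (forall b, T b -> f b <> 1%N -> b \in s).

Definition tprod (T : nat -> Prop) (f : nat -> nat) : nat :=
  match excluded_middle_informative (exists s, fin_support T f s) with
  | left H => \prod_(b <- proj1_sig (constructive_indefinite_description _ H)) f b
  | right _ => 0%N
  end.

Definition genfact (S : int -> Prop) (T : nat -> Prop) (k : nat) : nat :=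
  tprod T (fun b => epow b (alpha S b k)).

Definition setZ : int -> Prop := fun _ => True.
Definition setN : nat -> Prop := fun _ => True.

(* Fix b >= 2 and a finite sequence a_0, ..., a_{k-1} of integers. For x outside it,
   sum_j ord_b(x - a_j) = sum_{i >= 1} c_i(x), where c_i(x) is the number of a_j congruent
   to x modulo b^i. Call the sequence balanced when every residue class modulo every b^i
   contains floor(k/b^i) or floor(k/b^i) + 1 of its terms. For a balanced sequence every x
   gives at least sum_i floor(k/b^i), and this value is attained: descending through residue
   classes, the b classes mod b^(i+1) inside a class mod b^i at the floor cannot all lie
   above the floor. So the next term a_k of a b-ordering attains exactly this minimum, all
   its counts c_i(a_k) are at the floor, and appending it keeps the sequence balanced. By
   induction every b-ordering of Z is balanced with alpha_k(Z,b) = sum_i floor(k/b^i); the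
   natural order 0, 1, 2, ... is one of them. For b = 0 the exponent is 0, for b = 1 the
   factor 1^alpha is 1, and for b > k the exponent vanishes, so only 2 <= b <= k contribute
   to k!_{Z,N}. *)

From HB Require Import structures.
From Stdlib Require Import ClassicalEpsilon.
From mathcomp Require Import all_boot all_order all_algebra zify.
Set Implicit Arguments. Unset Strict Implicit. Unset Printing Implicit Defensive.
Import Order.TTheory GRing.Theory Num.Theory.

(** * Valuations and residue-class counts *)

Definition valn (b n : nat) : nat := \max_(k < n.+1 | b ^ k %| n) k.

Lemma dvdn_valn b n i : 1 < b -> 0 < n -> (b ^ i %| n) = (i <= valn b n).
Proof.
move=> b_gt1 n_gt0.
have dvd_b0 : b ^ (@ord0 n) %| n by rewrite expn0 dvd1n.
have dvd_valn : b ^ valn b n %| n.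
  by rewrite /valn (bigop.bigmax_eq_arg _ dvd_b0); case: arg_maxnP.
apply/idP/idP => [dvd_bi | le_i].
  have lt_i : i < n.+1.
    by rewrite ltnS (leq_trans (ltnW (ltn_expl i b_gt1))) // dvdn_leq.
  exact: (@leq_bigmax_cond _ (fun k : 'I_n.+1 => b ^ k %| n) (fun k => nat_of_ord k)
           (Ordinal lt_i)).
exact: dvdn_trans (dvdn_exp2l b le_i) dvd_valn.
Qed.

Lemma sum_nat_leq v N : v < N -> \sum_(1 <= i < N) (i <= v) = v.
Proof.
move=> lt_vN; rewrite (@big_cat_nat _ _ _ v.+1) //= ?ltnW //.
have -> : \sum_(v.+1 <= i < N) (i <= v) = 0.
  by rewrite big_nat_cond big1 // => i /andP[/andP[lt_vi _] _]; rewrite leqNgt lt_vi.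
have -> : \sum_(1 <= i < v.+1) (i <= v) = \sum_(1 <= i < v.+1) 1.
  by apply: eq_big_nat => i /andP[_ le_iv]; rewrite -ltnS le_iv.
by rewrite sum_nat_const_nat subn1 muln1 addn0.
Qed.

Lemma valn_sum b n N : 1 < b -> 0 < n -> ~~ (b ^ N %| n) ->
  valn b n = \sum_(1 <= i < N) (b ^ i %| n).
Proof.
move=> b_gt1 n_gt0; rewrite dvdn_valn // -ltnNge => lt_vN.
rewrite [RHS](eq_bigr (fun i => nat_of_bool (i <= valn b n))) ?sum_nat_leq //.
by move=> i _; rewrite dvdn_valn.
Qed.

Lemma ordE b d : 1 < b -> d != 0%R -> ord b d = Some (valn b `|d|%N).
Proof. by case: b => [|[|b]] // _ d_neq0; rewrite /ord (negbTE d_neq0). Qed.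

Lemma ord_b0 b : 1 < b -> ord b 0%R = None.
Proof. by case: b => [|[|b]]. Qed.

Lemma eaddA : associative eadd.
Proof. by case=> [x|] [y|] [z|] //=; rewrite addnA. Qed.

Lemma eaddC : commutative eadd.
Proof. by case=> [x|] [y|] //=; rewrite addnC. Qed.

Lemma add0e : left_id (Some 0) eadd.
Proof. by case. Qed.

HB.instance Definition _ := Monoid.isComLaw.Build enat (Some 0) eadd eaddA eaddC add0e.

Lemma ele_anti x y : ele x y -> ele y x -> x = y.
Proof. by case: x y => [m|] [n|] //= le_mn le_nm; rewrite (@anti_leq m n) ?le_mn. Qed.

Lemma ele0 x : ele (Some 0) x.
Proof. by case: x. Qed.

Lemma big_eadd_Some (I : Type) (r : seq I) (P : pred I) (F : I -> nat) :
  \big[eadd/Some 0]_(i <- r | P i) Some (F i) = Some (\sum_(i <- r | P i) F i).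
Proof. by rewrite (big_morph Some (_ : {morph Some : m n / m + n >-> eadd m n}) erefl). Qed.

Definition class_count (a : nat -> int) (k m : nat) (x : int) : nat :=
  \sum_(j < k) (m%:Z %| (x - a j)%R)%Z.

Lemma class_countS a k m x :
  class_count a k.+1 m x = class_count a k m x + (m%:Z %| (x - a k)%R)%Z.
Proof. by rewrite /class_count big_ord_recr. Qed.

Lemma class_count1 a k x : class_count a k 1 x = k.
Proof.
rewrite /class_count (eq_bigr (fun=> 1)) => [|j _]; last by rewrite dvdzE dvd1n.
by rewrite sum_nat_const card_ord muln1.
Qed.

Lemma class_count_congr a k m x y :
  (m%:Z %| (x - y)%R)%Z -> class_count a k m x = class_count a k m y.
Proof.
move=> dvd_xy; apply: eq_bigr => j _.
by rewrite -[x in (x - a j)%R](subrK y) -addrA rpredDl.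
Qed.

Lemma exists_residue (m : nat) (x : int) : 0 < m -> exists r : 'I_m, (m%:Z %| (x - r%:Z)%R)%Z.
Proof.
move=> m_gt0; have lt_rm : `|(x %% m%:Z)%Z|%N < m by lia.
exists (Ordinal lt_rm); apply/dvdzP; exists (x %/ m%:Z)%Z => /=.
have := divz_eq x m%:Z; lia.
Qed.

Lemma sum_nat_pred1 (I : finType) (j : I) : \sum_(i : I) (i == j) = 1.
Proof. by rewrite (bigD1 j) //= eqxx big1 // => i /negbTE ->. Qed.

Lemma sum_dvdz_translates (m : nat) (d : int) : 0 < m ->
  \sum_(t < m) (m%:Z %| (d + t%:Z)%R)%Z = 1.
Proof.
move=> m_gt0; have lt_rm : `|((- d) %% m%:Z)%Z|%N < m by lia.
have dvd_t (t : 'I_m) : (m%:Z %| (d + t%:Z)%R)%Z = (t == Ordinal lt_rm).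
  rewrite -val_eqE /= addrC -[X in (_ + X)%R]opprK -eqz_mod_dvd modz_small.
    by apply/eqP/eqP; lia.
  by have := ltn_ord t; lia.
by rewrite (eq_bigr _ (fun t _ => congr1 nat_of_bool (dvd_t t))) sum_nat_pred1.
Qed.

Lemma sum_dvdz_lift (b m : nat) (d : int) : 0 < b -> 0 < m ->
  \sum_(t < b) ((b * m)%:Z %| (d + (t * m)%:Z)%R)%Z = (m%:Z %| d)%Z.
Proof.
move=> b_gt0 m_gt0; have m_neq0 : (m%:Z != 0)%R by rewrite lt0r_neq0 // ltz_nat.
case: (boolP (m%:Z %| d)%Z) => [/dvdzP[e ->] | ndvd].
  under eq_bigr do rewrite !PoszM -mulrDl dvdz_mul2r //.
  exact: sum_dvdz_translates.
rewrite big1 // => t _; apply/eqP; rewrite eqb0; apply: contra ndvd => dvd_bm.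
rewrite -(rpredDr _ (_ : m%:Z %| (t * m)%:Z)%Z); last by rewrite PoszM dvdz_mull.
by apply: dvdz_trans dvd_bm; rewrite PoszM dvdz_mull.
Qed.

Lemma sum_class_count_lift a k b m y : 0 < b -> 0 < m ->
  \sum_(t < b) class_count a k (b * m) (y + (t * m)%:Z)%R = class_count a k m y.
Proof.
move=> b_gt0 m_gt0; rewrite /class_count exchange_big /=; apply: eq_bigr => j _.
by under eq_bigr do rewrite addrAC; rewrite sum_dvdz_lift.
Qed.

Lemma sum_class_count_residues a k m : 0 < m -> \sum_(r < m) class_count a k m r%:Z = k.
Proof.
move=> m_gt0; rewrite -[RHS](class_count1 a k 0) -(sum_class_count_lift _ _ 0 m_gt0) //.
by apply: eq_bigr => r _; rewrite !muln1 add0r.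
Qed.

Lemma osum_None b a k j : 1 < b -> j < k -> osum b a k (a j) = None.
Proof. by move=> b_gt1 lt_jk; rewrite /osum (bigD1 (Ordinal lt_jk)) //= subrr ord_b0. Qed.

Lemma osum_separated b a k x N : 1 < b ->
    (forall j, j < k -> ~~ ((b ^ N)%:Z %| (x - a j)%R)%Z) ->
  osum b a k x = Some (\sum_(1 <= i < N) class_count a k (b ^ i) x).
Proof.
move=> b_gt1 sep.
have ordE_sum (j : 'I_k) :
    ord b (x - a j)%R = Some (\sum_(1 <= i < N) ((b ^ i)%:Z %| (x - a j)%R)%Z).
  have nz : (x - a j != 0)%R by apply: contraNneq (sep j (ltn_ord j)) => ->; apply: dvdz0.
  rewrite ordE // (@valn_sum _ _ N b_gt1) ?absz_gt0 -?dvdzE ?sep //.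
by rewrite /osum (eq_bigr _ (fun j _ => ordE_sum j)) big_eadd_Some exchange_big.
Qed.

Lemma separated_eventually b a k x : 1 < b -> (forall j, j < k -> x != a j) ->
  exists N0, forall N, N0 <= N -> forall j, j < k -> ~~ ((b ^ N)%:Z %| (x - a j)%R)%Z.
Proof.
move=> b_gt1 fresh; exists (\max_(j < k) `|(x - a j)%R|%N).+1 => N le_N j lt_jk.
have d_gt0 : 0 < `|(x - a j)%R|%N by rewrite absz_gt0 subr_eq0 fresh.
have lt_dN : `|(x - a j)%R|%N < N.
  exact: leq_ltn_trans (leq_bigmax (F := fun j : 'I_k => `|(x - a j)%R|%N) (Ordinal lt_jk)) le_N.
have := ltn_expl N b_gt1; rewrite dvdzE /= => lt_N.
by apply/negP => /(dvdn_leq d_gt0); lia.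
Qed.

(** * Balanced sequences *)

Definition balanced_at (a : nat -> int) (k m : nat) : Prop :=
  forall x, k %/ m <= class_count a k m x <= (k %/ m).+1.

Definition balanced (b : nat) (a : nat -> int) (k : nat) : Prop :=
  forall i, balanced_at a k (b ^ i).

Lemma balanced0 b a : balanced b a 0.
Proof. by move=> i x; rewrite /class_count big_ord0 div0n. Qed.

Lemma balanced_at_two_minima a k m x y : 0 < m -> balanced_at a k m ->
    ~~ (m%:Z %| (x - y)%R)%Z ->
    class_count a k m x = k %/ m -> class_count a k m y = k %/ m ->
  ~~ (m %| k.+1).
Proof.
move=> m_gt0 bal ndvd cnt_x cnt_y; have [rx dvd_x] := exists_residue x m_gt0.
have [ry dvd_y] := exists_residue y m_gt0.
have neq_r : rx != ry.
  apply: contraNneq ndvd => eq_r.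
  have -> : (x - y = (x - rx%:Z) - (y - ry%:Z))%R by rewrite eq_r opprB addrA subrK.
  exact: rpredB.
(* The m class counts add up to k, leaving no room for two classes at the floor. *)
have : \sum_(r < m) (class_count a k m r%:Z + (r == rx) + (r == ry))
         <= \sum_(r < m) (k %/ m).+1.
  apply: leq_sum => r _; have := bal r.
  case: (eqVneq r rx) => [-> | _].
    by rewrite -(class_count_congr _ _ dvd_x) cnt_x (negbTE neq_r) addn0 addn1.
  case: (eqVneq r ry) => [-> | _].
    by rewrite -(class_count_congr _ _ dvd_y) cnt_y addn0 addn1.
  by rewrite !addn0 => /andP[].
rewrite !big_split /= sum_class_count_residues // sum_nat_const card_ord.
rewrite !sum_nat_pred1 => le_k; apply/negP => dvd_k1.
have : k.+1 = (k %/ m).+1 * m by rewrite -{1}(divnK dvd_k1) divnS // dvd_k1.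
lia.
Qed.

Lemma balanced_at_step a k m : 0 < m -> balanced_at a k m ->
  class_count a k m (a k) = k %/ m -> balanced_at a k.+1 m.
Proof.
move=> m_gt0 bal cnt_ak x; rewrite class_countS divnS //.
have := bal x; case: (boolP (m%:Z %| (x - a k)%R)%Z) => [dvd_x | ndvd_x].
  by rewrite (class_count_congr _ _ dvd_x) cnt_ak; case: (m %| k.+1) => /=; lia.
have [dvd_k1 | ndvd_k1] := boolP (m %| k.+1); last by rewrite /=; lia.
have : class_count a k m x != k %/ m.
  by apply: contraTneq dvd_k1 => cnt_x; exact: balanced_at_two_minima ndvd_x cnt_x cnt_ak.
by rewrite /=; lia.
Qed.

Definition legendre_sum (b k : nat) : nat := \sum_(1 <= i < k.+1) k %/ b ^ i.

Lemma legendre_sum_widen b k N : 1 < b -> k < N ->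
  \sum_(1 <= i < N) k %/ b ^ i = legendre_sum b k.
Proof.
move=> b_gt1 lt_kN; rewrite /legendre_sum (@big_cat_nat _ _ _ k.+1) //=.
have -> : \sum_(k.+1 <= i < N) k %/ b ^ i = 0; last by rewrite addn0.
rewrite big_nat_cond big1 // => i /andP[/andP[lt_ki _] _].
by apply: divn_small; have := ltn_expl i b_gt1; lia.
Qed.

Lemma osum_ge_legendre b a k x : 1 < b -> balanced b a k ->
  ele (Some (legendre_sum b k)) (osum b a k x).
Proof.
move=> b_gt1 bal; case: (boolP [exists j : 'I_k, x == a j]) => [/existsP[j /eqP ->] | fresh].
  by rewrite osum_None.
have fresh_x j : j < k -> x != a j.
  by move=> lt_jk; apply: contraNneq fresh => ->; apply/existsP; exists (Ordinal lt_jk).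
have [N0 sep] := separated_eventually b_gt1 fresh_x.
rewrite (osum_separated b_gt1 (sep (N0 + k.+1) (leq_addr _ _))) /=.
rewrite -(@legendre_sum_widen _ _ (N0 + k.+1)) ?ltn_addl //.
by apply: leq_sum => i _; case/andP: (bal i x).
Qed.

Lemma exists_min_class b a k L : 1 < b -> balanced b a k ->
  exists y, forall i, i <= L -> class_count a k (b ^ i) y = k %/ b ^ i.
Proof.
move=> b_gt1 bal; have b_gt0 : 0 < b by lia.
elim: L => [|L [y min_y]].
  by exists 0%R => i; rewrite leqn0 => /eqP ->; rewrite class_count1 divn1.
have bL_gt0 : 0 < b ^ L by rewrite expn_gt0 b_gt0.
pose child (t : 'I_b) := (y + (t * b ^ L)%:Z)%R.
have [t min_t | no_min] := pickP (fun t => class_count a k (b ^ L.+1) (child t) <= k %/ b ^ L.+1).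
  exists (child t) => i; rewrite leq_eqVlt => /orP[/eqP -> | lt_iL].
    by apply/eqP; rewrite eqn_leq min_t; case/andP: (bal L.+1 (child t)).
  have dvd_child : ((b ^ i)%:Z %| (child t - y)%R)%Z.
    by rewrite /child addrC addKr dvdzE /= dvdn_mull // dvdn_exp2l.
  by rewrite -min_y ?(ltnW lt_iL) //; apply: class_count_congr.
exfalso; have : \sum_(t < b) (k %/ b ^ L.+1).+1
                <= \sum_(t < b) class_count a k (b ^ L.+1) (child t).
  by apply: leq_sum => t _; rewrite ltnNge no_min.
rewrite expnS sum_class_count_lift // min_y // sum_nat_const card_ord [b * _]mulnC divnMA.
by have := divn_eq (k %/ b ^ L) b; have := ltn_pmod (k %/ b ^ L) b_gt0; nia.
Qed.

Lemma osum_floor_class_counts b a k x : 1 < b ->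
    (forall i, i <= k.+1 -> class_count a k (b ^ i) x = k %/ b ^ i) ->
  osum b a k x = Some (legendre_sum b k).
Proof.
move=> b_gt1 floor_x.
have sep j : j < k -> ~~ ((b ^ k.+1)%:Z %| (x - a j)%R)%Z.
  move=> lt_jk; have := floor_x k.+1 (leqnn _); rewrite divn_small ?(ltnW (ltn_expl _ b_gt1)) //.
  by move/eqP; rewrite sum_nat_eq0 => /forallP/(_ (Ordinal lt_jk)); rewrite eqb0.
rewrite (osum_separated b_gt1 sep); congr Some.
by apply: eq_big_nat => i /andP[_ lt_ik]; rewrite floor_x // ltnW.
Qed.

Lemma osum_attains_legendre b a k : 1 < b -> balanced b a k ->
  exists y, osum b a k y = Some (legendre_sum b k).
Proof.
move=> b_gt1 bal; have [y floor_y] := exists_min_class k.+1 b_gt1 bal.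
by exists y; apply: osum_floor_class_counts.
Qed.

Lemma eq_in_leq_sum (I : eqType) (r : seq I) (F G : I -> nat) :
  (forall i, F i <= G i) -> \sum_(i <- r) G i <= \sum_(i <- r) F i ->
  {in r, F =1 G}.
Proof.
move=> le_FG; elim: r => [|x r IHr] //; rewrite !big_cons => le_sum i.
have := le_FG x; have := @leq_sum _ r (fun=> true) F G (fun j _ => le_FG j).
rewrite inE => le_r le_x /orP[/eqP -> | r_i]; first lia.
by apply: IHr => //; lia.
Qed.

Lemma osum_legendre_class_count b a k x : 1 < b -> balanced b a k ->
    osum b a k x = Some (legendre_sum b k) ->
  forall i, class_count a k (b ^ i) x = k %/ b ^ i.
Proof.
move=> b_gt1 bal osum_x [|i]; first by rewrite class_count1 divn1.
have fresh j : j < k -> x != a j.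
  by move=> lt_jk; apply/eqP => eq_x; move: osum_x; rewrite eq_x osum_None.
have [N0 sep] := separated_eventually b_gt1 fresh.
pose N := N0 + i.+2 + k.+1.
have [le_N0 lt_kN lt_iN] : [/\ N0 <= N, k < N & i.+1 < N] by split; rewrite /N; lia.
move: osum_x; rewrite (osum_separated b_gt1 (sep N le_N0)).
rewrite -(legendre_sum_widen b_gt1 lt_kN) => -[eq_sum].
symmetry; apply: (@eq_in_leq_sum _ (index_iota 1 N) (fun i => k %/ b ^ i)
  (fun i => class_count a k (b ^ i) x)).
- by move=> l; case/andP: (bal l x).
- by rewrite eq_sum.
- by rewrite mem_index_iota lt_iN.
Qed.

(** * b-orderings of Z *)

Lemma ordering_osum_of_balanced b a k : 1 < b -> b_ordering setZ b a -> balanced b a k ->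
  osum b a k (a k) = Some (legendre_sum b k).
Proof.
move=> b_gt1 [_ min_a]; case: k => [|k] bal.
  by rewrite /osum big_ord0 /legendre_sum big_geq.
have [y osum_y] := osum_attains_legendre b_gt1 bal.
by apply: ele_anti; [rewrite -osum_y; apply: min_a | apply: osum_ge_legendre].
Qed.

Lemma ordering_balanced b a k : 1 < b -> b_ordering setZ b a -> balanced b a k.
Proof.
move=> b_gt1 ord_a; elim: k => [|k bal]; first exact: balanced0.
move=> i; apply: balanced_at_step (bal i) _; first by rewrite expn_gt0; lia.
exact: osum_legendre_class_count b_gt1 bal (ordering_osum_of_balanced b_gt1 ord_a bal) i.
Qed.

Lemma ordering_osum b a k : 1 < b -> b_ordering setZ b a ->
  osum b a k (a k) = Some (legendre_sum b k).
Proof.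
by move=> b_gt1 ord_a; apply: ordering_osum_of_balanced (ordering_balanced k b_gt1 ord_a).
Qed.

Lemma class_count_Posz k m : 0 < m -> class_count Posz k m k = k %/ m.
Proof.
move=> m_gt0; elim: k => [|k IHk]; first by rewrite /class_count big_ord0 div0n.
rewrite /class_count big_ord_recl subr0 divnS // -IHk dvdzE /=; congr addn.
by apply: eq_bigr => j _; rewrite /bump /=; congr (nat_of_bool (dvdz _ _)); lia.
Qed.

Lemma Posz_balanced b k : 1 < b -> balanced b Posz k.
Proof.
move=> b_gt1; elim: k => [|k bal]; first exact: balanced0.
move=> i; have bi_gt0 : 0 < b ^ i by rewrite expn_gt0; lia.
exact: balanced_at_step bi_gt0 (bal i) (class_count_Posz k bi_gt0).
Qed.

Lemma Posz_ordering b : 1 < b -> b_ordering setZ b Posz.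
Proof.
move=> b_gt1; split=> // i _ x _.
have floor_i l : l <= i.+1 -> class_count Posz i (b ^ l) i = i %/ b ^ l.
  by move=> _; apply: class_count_Posz; rewrite expn_gt0; lia.
by rewrite (osum_floor_class_counts b_gt1 floor_i); apply: osum_ge_legendre (Posz_balanced _ _).
Qed.

Lemma alpha_unique S b k v : (exists a, b_ordering S b a) ->
  (forall a, b_ordering S b a -> osum b a k (a k) = v) -> alpha S b k = v.
Proof.
move=> ex_ord osum_v; rewrite /alpha; case: excluded_middle_informative => // ex_a.
by case: constructive_indefinite_description => a /= /osum_v.
Qed.

Lemma alpha_legendre b k : 1 < b -> alpha setZ b k = Some (legendre_sum b k).
Proof.
move=> b_gt1; apply: alpha_unique; first by exists Posz; apply: Posz_ordering.
by move=> a; apply: ordering_osum.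
Qed.

Lemma osum0_fresh a k x : (forall j, j < k -> x != a j) -> osum 0 a k x = Some 0.
Proof.
by move=> fresh; rewrite /osum big1 // => j _; rewrite /ord subr_eq0 (negbTE (fresh j _)).
Qed.

Lemma exists_fresh (a : nat -> int) k : exists x : int, forall j, j < k -> x != a j.
Proof.
exists (\max_(j < k) `|a j|%N).+1 => j lt_jk; apply/eqP => eq_a.
have := leq_bigmax (F := fun j : 'I_k => `|a j|%N) (Ordinal lt_jk).
by rewrite /= -eq_a /= ltnn.
Qed.

Lemma alpha0 k : alpha setZ 0 k = Some 0.
Proof.
apply: alpha_unique => [|a [_ min_a]].
  exists Posz; split=> // i _ x _; rewrite osum0_fresh; first exact: ele0.
  by move=> j lt_ji; apply/eqP => -[eq_ij]; lia.
case: k => [|k]; first by rewrite /osum big_ord0.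
have [y fresh_y] := exists_fresh a k.+1.
by apply: ele_anti; [rewrite -(osum0_fresh fresh_y); apply: min_a | apply: ele0].
Qed.

(** * The generalized factorial *)

Lemma epow_alpha_eq1 b k : (b < 2) || (k < b) -> epow b (alpha setZ b k) = 1.
Proof.
case: b => [|[|b]] /= lt_kb; first by rewrite alpha0.
  by case: (alpha _ _ _) => //= n; rewrite exp1n.
rewrite alpha_legendre // /legendre_sum big_nat_cond big1 // => i /andP[/andP[i_gt0 _] _].
by apply/divn_small/(leq_trans lt_kb); rewrite -{1}(expn1 b.+2) leq_pexp2l.
Qed.

Lemma tprod_fin_support T f s : fin_support T f s -> tprod T f = \prod_(b <- s) f b.
Proof.
move=> supp_s; rewrite /tprod; case: excluded_middle_informative => [ex_s|]; last first.
  by case; exists s.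
case: constructive_indefinite_description => s' supp_s' /=.
have prod_neq1 r : \prod_(b <- r) f b = \prod_(b <- r | f b != 1) f b.
  by rewrite [LHS](bigID (fun b => f b != 1)) /= [X in _ * X]big1 ?muln1 // => b /negPn/eqP.
rewrite !prod_neq1 -!(big_filter _ (fun b => f b != 1)); apply/perm_big/uniq_perm.
- by case: supp_s' => /filter_uniq.
- by case: supp_s => /filter_uniq.
case: supp_s supp_s' => _ [in_T in_s] [_ [in_T' in_s']] b; rewrite !mem_filter.
by case: eqP => //= neq1; apply/idP/idP => [/in_T' | /in_T] T_b; [apply: in_s | apply: in_s'].
Qed.

Theorem theorem7p2 :
  (forall b k : nat, (2 <= b)%N ->
     alpha setZ b k = Some (\sum_(1 <= i < k.+1) k %/ b ^ i)%N) /\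
  (forall k : nat,
     genfact setZ setN k = (\prod_(2 <= b < k.+1) epow b (alpha setZ b k))%N).
Proof.
split=> [b k b_ge2 | k]; first exact: alpha_legendre.
apply: tprod_fin_support; split; first exact: iota_uniq.
split=> // b _; apply: contra_notT; rewrite mem_index_iota negb_and -ltnNge -leqNgt.
exact: epow_alpha_eq1.
Qed.
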